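(* Let $0<\theta_1<\dots<\theta_n<2\pi$ and set $\theta_{j+n}=\theta_j+2\pi$. For $A\subset\mathbb{R}$ write $A\ (\mathrm{mod}\ 2\pi)=\{x+2\pi m: x\in A, m\in\mathbb{Z}\}\cap[0,2\pi)$; for $a\in(0,2\pi)$ put $I(x,a)=[x,x+a]\ (\mathrm{mod}\ 2\pi)$ and, for $1\le j\le n$, $J_j(a)=\{x\in[0,2\pi): I(x,a)\subset(\theta_j,\theta_{j+1})\ (\mathrm{mod}\ 2\pi)\}$. For $a_1,\dots,a_k\in(0,2\pi)$ let $$\Sigma_k(a_1,\dots,a_k)=\bigcup_{i_1,\dots,i_k\in\{1,\dots,n\}\text{ all distinct}}\ \prod_{j=1}^kJ_{i_j}(a_j)\subset[0,2\pi)^k.$$ Then for $(y_1,\dots,y_k)\in[0,2\pi)^k$, $(y_1,\dots,y_k)\in\Sigma_k(a_1,\dots,a_k)$ holds if and only if all of the following hold: (i) $I(y_l,a_l)\cap I(y_j,a_j)=\emptyset$ for $1\le l<j\le k$; (ii) $\theta_l\notin I(y_j,a_j)$ for all $1\le j\le k$, $1\le l\le n$; (iii) for all $p,q\in\{1,\dots,k\}$ with $y_p<y_q$, $\{\theta_1,\dots,\theta_n\}\cap(y_p,y_q)\ne\emptyset$ and $\{\theta_1,\dots,\theta_n\}\setminus[y_p,y_q]\neq\emptyset$. *)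

From Stdlib Require Import Reals Lra Lia ZArith Arith.
Open Scope R_scope.

Definition mod2pi (A : R -> Prop) : R -> Prop :=
  fun y => (exists x (m : Z), A x /\ y = x + 2 * PI * IZR m) /\ 0 <= y < 2 * PI.

Definition Iarc (x a : R) : R -> Prop := mod2pi (fun t => x <= t <= x + a).

(* theta is indexed 1..n; theta_{j+n} = theta_j + 2 pi *)
Definition theta_ext (n : nat) (theta : nat -> R) (j : nat) : R :=
  if (j <=? n)%nat then theta j else theta (j - n)%nat + 2 * PI.

Definition Jset (n : nat) (theta : nat -> R) (j : nat) (a : R) : R -> Prop :=
  fun x => 0 <= x < 2 * PI /\
    forall t, Iarc x a t ->
      mod2pi (fun s => theta_ext n theta j < s < theta_ext n theta (j + 1)) t.

Definition Sigma (n : nat) (theta : nat -> R) (k : nat) (a y : nat -> R) : Prop :=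
  exists i : nat -> nat,
    (forall j, (1 <= j <= k)%nat -> (1 <= i j <= n)%nat) /\
    (forall j l, (1 <= j <= k)%nat -> (1 <= l <= k)%nat -> j <> l -> i j <> i l) /\
    (forall j, (1 <= j <= k)%nat -> Jset n theta (i j) (a j) (y j)).

(** The open arcs between consecutive angles [theta_j] (the last one wrapping
    around [0]) partition the circle minus the angles; call them gaps.  An arc
    [I(y,a)] lies in gap [i] exactly when its starting point [y] does and it
    contains no angle, since a connected arc meeting no [theta_l] cannot leave
    its gap.  Hence [y] lies in [Sigma_k] iff every [y_j] lies in some gap with
    no angle on its arc, and the gaps of distinct indices are distinct.  Two
    points [u < v] of [[0, 2pi)] lie in different gaps iff some angle lies in
    [(u, v)] and some angle lies outside [[u, v]], which is condition (iii);
    coinciding points are ruled out by the disjointness (i). *)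

From Stdlib Require Import Reals Lra Lia.
From Stdlib Require Import ClassicalEpsilon.
Open Scope R_scope.

Lemma winding_cases (x : R) (m : Z) :
  0 < x < 4 * PI -> 0 <= x + 2 * PI * IZR m < 2 * PI -> m = 0%Z \/ m = (-1)%Z.
Proof.
  intros Hx Ht. pose proof PI_RGT_0.
  assert (Hm : -2 < IZR m < 1) by nra.
  destruct Hm as [Hlo Hhi]. apply lt_IZR in Hlo, Hhi. lia.
Qed.

Lemma Iarc_range (x a t : R) : Iarc x a t -> 0 <= t < 2 * PI.
Proof. intros [_ Ht]. exact Ht. Qed.

Lemma Iarc_self (x a : R) : 0 <= a -> 0 <= x < 2 * PI -> Iarc x a x.
Proof. intros Ha Hx. split; [exists x, 0%Z; split|]; lra. Qed.

Lemma Iarc_shift (x a t : R) (m : Z) :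
  0 <= t < 2 * PI -> x <= t + 2 * PI * IZR m <= x + a -> Iarc x a t.
Proof.
  intros Ht Hm. split; [|exact Ht].
  exists (t + 2 * PI * IZR m), (- m)%Z. rewrite opp_IZR. split; [exact Hm | ring].
Qed.

Lemma theta_ext_le (n : nat) (theta : nat -> R) (i : nat) :
  (i <= n)%nat -> theta_ext n theta i = theta i.
Proof. intros Hi. unfold theta_ext. apply Nat.leb_le in Hi. now rewrite Hi. Qed.

Lemma theta_ext_succ_last (n : nat) (theta : nat -> R) :
  theta_ext n theta (n + 1) = theta 1%nat + 2 * PI.
Proof.
  unfold theta_ext. replace (n + 1 <=? n)%nat with false by (symmetry; apply Nat.leb_gt; lia).
  now replace (n + 1 - n)%nat with 1%nat by lia.
Qed.

Section Gaps.

Variables (n : nat) (theta : nat -> R).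
Hypothesis Hn : (1 <= n)%nat.
Hypothesis Hpos : 0 < theta 1%nat.
Hypothesis Hinc : forall j, (1 <= j < n)%nat -> theta j < theta (S j).
Hypothesis Htop : theta n < 2 * PI.

(* Gap [n] is the wrap-around arc [(theta_n, theta_1 + 2 pi)] read in [[0, 2pi)]. *)
Definition in_gap (i : nat) (t : R) : Prop :=
  ((i < n)%nat /\ theta i < t < theta (S i)) \/
  (i = n /\ (theta n < t \/ t < theta 1%nat)).

Definition separated (u v : R) : Prop :=
  (exists l, (1 <= l <= n)%nat /\ u < theta l < v) /\
  (exists l, (1 <= l <= n)%nat /\ ~ (u <= theta l <= v)).

Lemma theta_lt (i j : nat) : (1 <= i)%nat -> (i < j <= n)%nat -> theta i < theta j.
Proof.
  intros Hi. induction j as [|j IH]; intros Hij; [lia|].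
  destruct (Nat.eq_dec i j) as [->|Hne]; [apply Hinc; lia|].
  apply Rlt_trans with (theta j); [apply IH; lia | apply Hinc; lia].
Qed.

Lemma theta_le (i j : nat) : (1 <= i)%nat -> (i <= j <= n)%nat -> theta i <= theta j.
Proof.
  intros Hi Hij. destruct (Nat.eq_dec i j) as [->|Hne]; [lra|].
  left. apply theta_lt; lia.
Qed.

Lemma theta_range (i : nat) : (1 <= i <= n)%nat -> 0 < theta i < 2 * PI.
Proof.
  intros Hi. pose proof (theta_le 1 i ltac:(lia) ltac:(lia)).
  pose proof (theta_le i n ltac:(lia) ltac:(lia)). lra.
Qed.

Lemma mod2pi_gap_iff (i : nat) (t : R) : (1 <= i <= n)%nat -> 0 <= t < 2 * PI ->
  mod2pi (fun s => theta_ext n theta i < s < theta_ext n theta (i + 1)) t <-> in_gap i t.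
Proof.
  intros Hi Ht. pose proof PI_RGT_0.
  pose proof (theta_range 1 ltac:(lia)). pose proof (theta_range n ltac:(lia)).
  destruct (Nat.eq_dec i n) as [->|Hne].
  - rewrite theta_ext_le, theta_ext_succ_last by lia. split.
    + intros [[x [m [Hx ->]]] _]. right. split; [reflexivity|].
      destruct (winding_cases x m) as [->| ->]; [lra|exact Ht|lra|lra].
    + intros [[Hc _]|[_ [Hc|Hc]]]; [lia| |]; split; try exact Ht.
      * exists t, 0%Z. split; lra.
      * exists (t + 2 * PI), (-1)%Z. split; lra.
  - rewrite !theta_ext_le by lia. replace (i + 1)%nat with (S i) by lia.
    pose proof (theta_range i ltac:(lia)). pose proof (theta_range (S i) ltac:(lia)).
    split.
    + intros [[x [m [Hx ->]]] _]. left. split; [lia|].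
      destruct (winding_cases x m) as [->| ->]; [lra|exact Ht|lra|lra].
    + intros [[_ Hc]|[Hc _]]; [|lia].
      split; [exists t, 0%Z; split|]; lra.
Qed.

Lemma in_gap_unique (i j : nat) (t : R) : (1 <= i <= n)%nat -> (1 <= j <= n)%nat ->
  in_gap i t -> in_gap j t -> i = j.
Proof.
  intros Hi Hj Hit Hjt. destruct (Nat.lt_total i j) as [Hlt|[Heq|Hgt]]; [|exact Heq|];
    exfalso.
  - destruct Hit as [[Hi' Hc]|[-> _]]; [|lia].
    destruct Hjt as [[Hj' Hd]|[-> [Hd|Hd]]].
    + pose proof (theta_le (S i) j ltac:(lia) ltac:(lia)). lra.
    + pose proof (theta_le (S i) n ltac:(lia) ltac:(lia)). lra.
    + pose proof (theta_le 1 i ltac:(lia) ltac:(lia)). lra.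
  - destruct Hjt as [[Hj' Hc]|[-> _]]; [|lia].
    destruct Hit as [[Hi' Hd]|[-> [Hd|Hd]]].
    + pose proof (theta_le (S j) i ltac:(lia) ltac:(lia)). lra.
    + pose proof (theta_le (S j) n ltac:(lia) ltac:(lia)). lra.
    + pose proof (theta_le 1 j ltac:(lia) ltac:(lia)). lra.
Qed.

Lemma not_in_gap_theta (i l : nat) : (1 <= l <= n)%nat -> ~ in_gap i (theta l).
Proof.
  intros Hl [[Hi Hc]|[-> Hc]].
  - destruct (Nat.le_gt_cases l i).
    + pose proof (theta_le l i ltac:(lia) ltac:(lia)). lra.
    + pose proof (theta_le (S i) l ltac:(lia) ltac:(lia)). lra.
  - pose proof (theta_le l n ltac:(lia) ltac:(lia)).
    pose proof (theta_le 1 l ltac:(lia) ltac:(lia)). lra.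
Qed.

Lemma inner_gap_exists (t : R) (m : nat) : (1 <= m <= n)%nat ->
  theta 1%nat < t < theta m -> (forall l, (1 <= l <= n)%nat -> t <> theta l) ->
  exists i, (1 <= i < m)%nat /\ theta i < t < theta (S i).
Proof.
  induction m as [|m IH]; intros Hm Ht Hne; [lia|].
  destruct (Nat.eq_dec m 0) as [->|Hm0]; [lra|].
  destruct (Rlt_or_le t (theta m)) as [Hc|Hc].
  - destruct (IH ltac:(lia) (conj (proj1 Ht) Hc) Hne) as [i [Hi Hit]].
    exists i. split; [lia | exact Hit].
  - exists m. split; [lia|]. split; [|apply Ht].
    destruct Hc as [Hc|Hc]; [exact Hc|]. exfalso. apply (Hne m); [lia | auto].
Qed.

Lemma in_gap_exists (t : R) : (forall l, (1 <= l <= n)%nat -> t <> theta l) ->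
  exists i, (1 <= i <= n)%nat /\ in_gap i t.
Proof.
  intros Hne.
  destruct (Rlt_or_le t (theta 1%nat)) as [Hc|Hc];
    [exists n; split; [lia | right; auto]|].
  destruct (Rlt_or_le (theta n) t) as [Hd|Hd];
    [exists n; split; [lia | right; auto]|].
  assert (Ht : theta 1%nat < t < theta n).
  { split; [destruct Hc as [Hc|Hc] | destruct Hd as [Hd|Hd]]; auto;
      exfalso; [apply (Hne 1%nat) | apply (Hne n)]; auto; lia. }
  destruct (inner_gap_exists t n ltac:(lia) Ht Hne) as [i [Hi Hit]].
  exists i. split; [lia | left; split; [lia | exact Hit]].
Qed.

Lemma in_gap_separated (i j : nat) (u v : R) :
  (1 <= i <= n)%nat -> (1 <= j <= n)%nat -> i <> j ->
  in_gap i u -> in_gap j v -> u < v -> separated u v.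
Proof.
  intros Hi Hj Hij Hu Hv Huv.
  pose proof (theta_le 1 i ltac:(lia) ltac:(lia)). pose proof (theta_le i n ltac:(lia) ltac:(lia)).
  pose proof (theta_le 1 j ltac:(lia) ltac:(lia)). pose proof (theta_le j n ltac:(lia) ltac:(lia)).
  destruct Hu as [[Hi' Hu]|[-> Hu]]; destruct Hv as [[Hj' Hv]|[-> Hv]]; [| | |lia].
  - assert (i < j)%nat.
    { destruct (Nat.lt_total i j) as [|[|Hgt]]; [auto|lia|].
      pose proof (theta_le (S j) i ltac:(lia) ltac:(lia)). lra. }
    pose proof (theta_le (S i) j ltac:(lia) ltac:(lia)).
    split; [exists (S i) | exists i]; split; try lia; lra.
  - pose proof (theta_le (S i) n ltac:(lia) ltac:(lia)).
    split; [exists (S i) | exists i]; split; try lia; lra.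
  - pose proof (theta_le (S j) n ltac:(lia) ltac:(lia)).
    split; [exists 1%nat | exists n]; split; try lia; lra.
Qed.

Lemma in_gap_not_separated (i : nat) (u v : R) : (1 <= i <= n)%nat ->
  in_gap i u -> in_gap i v -> u < v -> ~ separated u v.
Proof.
  intros Hi Hu Hv Huv [[l [Hl Hin]] [l' [Hl' Hout]]].
  pose proof (theta_le 1 l ltac:(lia) ltac:(lia)). pose proof (theta_le l n ltac:(lia) ltac:(lia)).
  pose proof (theta_le 1 l' ltac:(lia) ltac:(lia)). pose proof (theta_le l' n ltac:(lia) ltac:(lia)).
  destruct Hu as [[Hi' Hu]|[-> Hu]]; destruct Hv as [[Hi'' Hv]|[Hin_n Hv]]; try lia.
  - destruct (Nat.le_gt_cases l i).
    + pose proof (theta_le l i ltac:(lia) ltac:(lia)). lra.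
    + pose proof (theta_le (S i) l ltac:(lia) ltac:(lia)). lra.
  - destruct Hu, Hv; lra.
Qed.

Lemma Jset_arc_in_gap (i : nat) (a x t : R) : (1 <= i <= n)%nat ->
  Jset n theta i a x -> Iarc x a t -> in_gap i t.
Proof.
  intros Hi [_ HJ] Ht. apply (mod2pi_gap_iff i t Hi (Iarc_range _ _ _ Ht)). now apply HJ.
Qed.

Lemma Jset_iff (i : nat) (a y : R) : (1 <= i <= n)%nat -> 0 <= a -> 0 <= y < 2 * PI ->
  Jset n theta i a y <->
  in_gap i y /\ (forall l, (1 <= l <= n)%nat -> ~ Iarc y a (theta l)).
Proof.
  intros Hi Ha Hy. split.
  - intros HJ. split; [exact (Jset_arc_in_gap i a y y Hi HJ (Iarc_self y a Ha Hy))|].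
    intros l Hl Hc. exact (not_in_gap_theta i l Hl (Jset_arc_in_gap i a y _ Hi HJ Hc)).
  - intros [Hgap Hfree]. split; [exact Hy|].
    intros t Ht. pose proof (Iarc_range _ _ _ Ht) as Htr.
    destruct Ht as [[s [m [Hs ->]]] _]. split; [|exact Htr].
    assert (Hfree' : forall l (z : Z), (1 <= l <= n)%nat ->
              ~ (y <= theta l + 2 * PI * IZR z <= y + a)).
    { intros l z Hl Hc. pose proof (theta_range l Hl).
      apply (Hfree l Hl), (Iarc_shift _ _ _ z); [lra | exact Hc]. }
    pose proof (theta_range 1 ltac:(lia)). pose proof (theta_range n ltac:(lia)).
    (* [s] cannot pass the upper end of the gap of [y]: that angle would lie on the arc. *)
    destruct Hgap as [[Hi' Hc]|[-> [Hc|Hc]]].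
    + rewrite !theta_ext_le by lia. replace (i + 1)%nat with (S i) by lia.
      pose proof (Hfree' (S i) 0%Z ltac:(lia)) as Hnext.
      rewrite Rmult_0_r, Rplus_0_r in Hnext.
      exists s, m. split; [|reflexivity]. split; lra.
    + rewrite theta_ext_le, theta_ext_succ_last by lia.
      pose proof (Hfree' 1%nat 1%Z ltac:(lia)) as Hnext.
      rewrite Rmult_1_r in Hnext.
      exists s, m. split; [|reflexivity]. split; lra.
    + rewrite theta_ext_le, theta_ext_succ_last by lia.
      pose proof (Hfree' 1%nat 0%Z ltac:(lia)) as Hnext.
      rewrite Rmult_0_r, Rplus_0_r in Hnext.
      exists (s + 2 * PI), (m - 1)%Z. rewrite minus_IZR. split; [|ring]. split; lra.
Qed.

Section Configuration.

Variables (k : nat) (a y : nat -> R).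
Hypothesis Ha : forall j, (1 <= j <= k)%nat -> 0 < a j < 2 * PI.
Hypothesis Hy : forall j, (1 <= j <= k)%nat -> 0 <= y j < 2 * PI.

Definition arcs_disjoint : Prop :=
  forall l j, (1 <= l)%nat -> (l < j)%nat -> (j <= k)%nat ->
    forall t, ~ (Iarc (y l) (a l) t /\ Iarc (y j) (a j) t).

Definition arcs_avoid_theta : Prop :=
  forall j l, (1 <= j <= k)%nat -> (1 <= l <= n)%nat -> ~ Iarc (y j) (a j) (theta l).

Definition points_separated : Prop :=
  forall p q, (1 <= p <= k)%nat -> (1 <= q <= k)%nat -> y p < y q -> separated (y p) (y q).

Lemma Iarc_start (j : nat) : (1 <= j <= k)%nat -> Iarc (y j) (a j) (y j).
Proof. intros Hj. apply Iarc_self; [left; apply Ha | apply Hy]; exact Hj. Qed.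

Lemma Sigma_conditions :
  Sigma n theta k a y -> arcs_disjoint /\ arcs_avoid_theta /\ points_separated.
Proof.
  intros [i [Hi_range [Hi_inj HJ]]].
  assert (Harc : forall j t, (1 <= j <= k)%nat -> Iarc (y j) (a j) t -> in_gap (i j) t).
  { intros j t Hj. exact (Jset_arc_in_gap (i j) (a j) (y j) t (Hi_range j Hj) (HJ j Hj)). }
  split; [|split].
  - intros l j Hl Hlj Hj t [Hlt Hjt].
    apply (Hi_inj l j ltac:(lia) ltac:(lia) ltac:(lia)).
    apply (in_gap_unique _ _ t (Hi_range l ltac:(lia)) (Hi_range j ltac:(lia)));
      apply Harc; auto; lia.
  - intros j l Hj Hl Hc. exact (not_in_gap_theta (i j) l Hl (Harc j _ Hj Hc)).
  - intros p q Hp Hq Hpq.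
    apply (in_gap_separated (i p) (i q)); auto using Iarc_start.
    apply Hi_inj; auto. intros ->. lra.
Qed.

Lemma gap_assignment_exists : arcs_avoid_theta ->
  exists i : nat -> nat,
    forall j, (1 <= j <= k)%nat -> (1 <= i j <= n)%nat /\ in_gap (i j) (y j).
Proof.
  intros Hfree.
  assert (Hex : forall j, exists g,
             (1 <= j <= k)%nat -> (1 <= g <= n)%nat /\ in_gap g (y j)).
  { intros j. destruct (classic (1 <= j <= k)%nat) as [Hj|Hj]; [|exists 0%nat; tauto].
    destruct (in_gap_exists (y j)) as [g Hg]; [|exists g; auto].
    intros l Hl Heq. apply (Hfree j l Hj Hl). rewrite <- Heq. exact (Iarc_start j Hj). }
  exact (choice _ Hex).
Qed.

Lemma gap_assignment_injective (i : nat -> nat) :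
  arcs_disjoint -> points_separated ->
  (forall j, (1 <= j <= k)%nat -> (1 <= i j <= n)%nat /\ in_gap (i j) (y j)) ->
  forall p q, (1 <= p <= k)%nat -> (1 <= q <= k)%nat -> p <> q -> i p <> i q.
Proof.
  intros Hdisj Hsep Hi p q Hp Hq Hpq Heq.
  destruct (Hi p Hp) as [_ Hgp], (Hi q Hq) as [Hiq Hgq]. rewrite Heq in Hgp.
  destruct (Rtotal_order (y p) (y q)) as [Hlt|[Heqy|Hgt]].
  - exact (in_gap_not_separated _ _ _ Hiq Hgp Hgq Hlt (Hsep p q Hp Hq Hlt)).
  - pose proof (Iarc_start p Hp) as Hp_start.
    assert (Hq_start : Iarc (y q) (a q) (y p)) by (rewrite Heqy; exact (Iarc_start q Hq)).
    destruct (Nat.lt_gt_cases p q) as [[Hc|Hc] _]; [exact Hpq| |].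
    + exact (Hdisj p q ltac:(lia) Hc ltac:(lia) (y p) (conj Hp_start Hq_start)).
    + exact (Hdisj q p ltac:(lia) Hc ltac:(lia) (y p) (conj Hq_start Hp_start)).
  - exact (in_gap_not_separated _ _ _ Hiq Hgq Hgp Hgt (Hsep q p Hq Hp Hgt)).
Qed.

Lemma Sigma_of_conditions :
  arcs_disjoint -> arcs_avoid_theta -> points_separated -> Sigma n theta k a y.
Proof.
  intros Hdisj Hfree Hsep.
  destruct (gap_assignment_exists Hfree) as [i Hi].
  exists i. split; [|split].
  - intros j Hj. apply Hi, Hj.
  - exact (gap_assignment_injective i Hdisj Hsep Hi).
  - intros j Hj. destruct (Hi j Hj) as [Hij Hg].
    apply (Jset_iff (i j) (a j) (y j) Hij); [left; apply Ha, Hj | apply Hy, Hj |].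
    split; [exact Hg|]. intros l Hl. exact (Hfree j l Hj Hl).
Qed.

End Configuration.

End Gaps.

Theorem lemma3 (n : nat) (theta : nat -> R)
  (Hn : (1 <= n)%nat)
  (Hpos : 0 < theta 1%nat)
  (Hinc : forall j, (1 <= j < n)%nat -> theta j < theta (S j))
  (Htop : theta n < 2 * PI)
  (k : nat) (a y : nat -> R)
  (Ha : forall j, (1 <= j <= k)%nat -> 0 < a j < 2 * PI)
  (Hy : forall j, (1 <= j <= k)%nat -> 0 <= y j < 2 * PI) :
  Sigma n theta k a y <->
  ((forall l j, (1 <= l)%nat -> (l < j)%nat -> (j <= k)%nat ->
       forall t, ~ (Iarc (y l) (a l) t /\ Iarc (y j) (a j) t)) /\
   (forall j l, (1 <= j <= k)%nat -> (1 <= l <= n)%nat ->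
       ~ Iarc (y j) (a j) (theta l)) /\
   (forall p q, (1 <= p <= k)%nat -> (1 <= q <= k)%nat -> y p < y q ->
       (exists l, (1 <= l <= n)%nat /\ y p < theta l < y q) /\
       (exists l, (1 <= l <= n)%nat /\ ~ (y p <= theta l <= y q)))).
Proof.
  split.
  - exact (Sigma_conditions n theta Hn Hpos Hinc Htop k a y Ha Hy).
  - intros (Hdisj & Hfree & Hsep).
    exact (Sigma_of_conditions n theta Hn Hpos Hinc Htop k a y Ha Hy Hdisj Hfree Hsep).
Qed.
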